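(* For every non-trivial finite Abelian group $(A,+)$ we have $n(A) \le 8|A|$.
   Context: For an integer $n\ge 1$, $\overleftrightarrow{K}_n$ denotes the complete digraph on $n$ vertices whose arc set consists of all ordered pairs $(x,y)$ of distinct vertices. For a set $A$, an $A$-arc-labelling of $\overleftrightarrow{K}_n$ is a function $w$ from the arc set of $\overleftrightarrow{K}_n$ to $A$. If $(A,+)$ is an Abelian group, $w$ is called zero-sum-free if there is no directed cycle (including directed cycles of length two, i.e. digons $x\to y\to x$) for which the sum of the arc-labels is $0$. For a non-trivial finite Abelian group $A$, $n(A)\ge 2$ is the smallest integer such that $\overleftrightarrow{K}_{n(A)}$ has no zero-sum-free $A$-arc-labelling, i.e. for every $A$-arc-labelling of $\overleftrightarrow{K}_{n(A)}$ there is a directed cycle whose arc-labels sum to zero. *)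

From mathcomp Require Import all_boot all_algebra.
Set Implicit Arguments. Unset Strict Implicit. Unset Printing Implicit Defensive.
Import GRing.Theory.
Local Open Scope ring_scope.

(* An A-arc-labelling of the complete digraph on vertex set 'I_n is modelled
   as w : 'I_n -> 'I_n -> A; w x y is the label of arc (x,y) (x <> y).
   Values w x x are never used. *)

Definition is_dcycle (n : nat) (s : seq 'I_n) : bool :=
  uniq s && (2 <= size s)%N.

Definition cycle_sum (A : zmodType) (n : nat) (w : 'I_n -> 'I_n -> A)
  (s : seq 'I_n) : A :=
  \sum_(p <- zip s (rot 1 s)) w p.1 p.2.

Definition zero_sum_free (A : zmodType) (n : nat) (w : 'I_n -> 'I_n -> A) : Prop :=
  forall s : seq 'I_n, is_dcycle s -> cycle_sum w s != 0.

Definition no_zsf_labelling (A : zmodType) (n : nat) : Prop :=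
  forall w : 'I_n -> 'I_n -> A, ~ zero_sum_free w.

From mathcomp Require Import all_boot fingroup action all_algebra.
From mathcomp Require Import zify.
Set Implicit Arguments. Unset Strict Implicit. Unset Printing Implicit Defensive.
Import GRing.Theory.

(* A zero-sum-free labelling of the complete digraph on a vertex set R with
   labels in a finite abelian group H has #|R| <= 4|H| - 3; we argue by
   induction on |H|.  Fix a vertex x0 and let T be the set of label sums of the
   simple paths from x0 to a current endpoint a.  T never contains -w(z,x0) for
   the endpoint z, as that would close a zero-sum cycle.  If two unused vertices
   y, z satisfy T + w(a,z) <> T + w(a,y) + w(y,z), moving the endpoint to z,
   directly or through y, uses two vertices and enlarges T.  Otherwise the
   potential shift w'(y,z) = w(y,z) + w(a,y) - w(a,z), which preserves cycle
   sums, takes the remaining labels into the stabiliser of T, a proper subgroup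
   of H, to which induction applies.  Hence n(A) <= 4|A| - 2. *)

Local Open Scope group_scope.

Section RcosetStabiliser.

Variable gT : finGroupType.
Implicit Types (H : {group gT}) (T : {set gT}).

Lemma rcoset_stabP H T h :
  reflect (h \in H /\ T :* h = T) (h \in 'C_H[T | 'Rs]).
Proof.
rewrite inE; apply: (iffP andP) => -[hH e]; split=> //.
  by move/astab1P: e; rewrite /= rcosetE.
by apply/astab1P; rewrite /= rcosetE.
Qed.

Lemma card_rcoset_stab H T : T != set0 -> T \proper H ->
  (2 * #|'C_H[T | 'Rs]| <= #|H|)%N.
Proof.
move=> /set0Pn[t tT] /properP[sTH [u uH uNT]].
have sKH : 'C_H[T | 'Rs] \subset H := subsetIl _ _.
have : ~~ (H \subset 'C_H[T | 'Rs]).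
  apply/subsetPn; exists (t^-1 * u); first exact: groupM (groupVr (subsetP sTH t tT)) uH.
  apply/rcoset_stabP => -[_ e]; move: uNT.
  by rewrite -e mem_rcoset invMg invgK mulKVg tT.
by rewrite -indexg_gt1 -(Lagrange sKH) mulnC leq_mul2l => ->; rewrite orbT.
Qed.

Lemma rcoset_subG H T c : T \subset H -> c \in H -> T :* c \subset H.
Proof. by move=> sTH cH; rewrite -(rcoset_id cH) mulSg. Qed.

Lemma card_rcosetU_gt T c d : T :* c != T :* d -> (#|T| < #|T :* c :|: T :* d|)%N.
Proof.
move=> neq_cd; rewrite -(card_rcoset T c); apply/proper_card/properUl.
by apply: contra neq_cd => sub; rewrite eq_sym eqEcard sub !card_rcoset leqnn.
Qed.

End RcosetStabiliser.

Local Open Scope ring_scope.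

Section CycleSums.

Variables (V : zmodType) (n : nat).
Implicit Types (w : 'I_n -> 'I_n -> V) (R : {set 'I_n}) (x y z : 'I_n) (q s : seq 'I_n).

Fixpoint path_sum w x q : V :=
  if q is y :: q' then w x y + path_sum w y q' else 0.

Lemma path_sum_rcons w x q z :
  path_sum w x (rcons q z) = path_sum w x q + w (last x q) z.
Proof. by elim: q x => [|y q IHq] x /=; rewrite ?addr0 ?add0r // IHq addrA. Qed.

Lemma path_sum_shift w (f : 'I_n -> V) x q :
  path_sum (fun u v => w u v + f u - f v) x q = path_sum w x q + f x - f (last x q).
Proof.
elim: q x => [|y q IHq] x /=; first by rewrite add0r subrr.
by rewrite IHq !addrA; congr (_ - _); rewrite addrAC subrK addrAC.
Qed.

Lemma cycle_sum_cons w x q : cycle_sum w (x :: q) = path_sum w x (rcons q x).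
Proof.
rewrite /cycle_sum rot1_cons; elim: q {1 3}x => [|y q IHq] z /=.
  by rewrite big_seq1 addr0.
by rewrite big_cons IHq.
Qed.

Lemma cycle_sum_shift w (f : 'I_n -> V) s :
  cycle_sum (fun u v => w u v + f u - f v) s = cycle_sum w s.
Proof.
case: s => [|x q]; first by rewrite /cycle_sum !big_nil.
by rewrite !cycle_sum_cons path_sum_shift last_rcons addrK.
Qed.

Definition zero_sum_free_on w R :=
  forall s, is_dcycle s -> {subset s <= R} -> cycle_sum w s != 0.

End CycleSums.

Section ZeroSumFree.

Variables (A : finZmodType) (n : nat).
Implicit Types (H K : {group A}) (T : {set A}) (w : 'I_n -> 'I_n -> A).
Implicit Types (R U : {set 'I_n}) (x y z a : 'I_n).

Lemma groupD H u v : u \in H -> v \in H -> u + v \in H.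
Proof. exact: groupM. Qed.

Lemma groupN H u : u \in H -> - u \in H.
Proof. exact: groupVr. Qed.

Lemma mem_rcosetB T c u : (u \in T :* c) = (u - c \in T).
Proof. exact: mem_rcoset. Qed.

Lemma rcosetD T c d : T :* (c + d) = T :* c :* d.
Proof. exact: rcosetM. Qed.

Definition labels_in w R H := {in R &, forall x y, x != y -> w x y \in H}.

Lemma zsf_card_le1 w R H : (#|H| <= 1)%N ->
  labels_in w R H -> zero_sum_free_on w R -> (#|R| <= 1)%N.
Proof.
move=> /card_le1_trivg H1 labw zsfw; rewrite leqNgt.
apply/card_gt1P => -[x [y [xR yR xy]]].
have lab1 u v : u \in R -> v \in R -> u != v -> w u v = 0.
  by move=> uR vR uv; have := labw u v uR vR uv; rewrite H1 inE => /eqP.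
have dcxy : is_dcycle [:: x; y] by rewrite /is_dcycle /= inE xy.
have sxyR : {subset [:: x; y] <= R} by move=> u; rewrite !inE => /orP[] /eqP ->.
have := zsfw _ dcxy sxyR; rewrite cycle_sum_cons /=.
by rewrite lab1 // lab1 1?eq_sym // !addr0 eqxx.
Qed.

Section PathGrowth.

Variables (H : {group A}) (w : 'I_n -> 'I_n -> A) (R0 : {set 'I_n}) (x0 : 'I_n).
Hypothesis labels_w : labels_in w R0 H.
Hypothesis zsf_w : zero_sum_free_on w R0.
Hypothesis bound_proper : forall K w' R, (#|K| < #|H|)%N ->
  labels_in w' R K -> zero_sum_free_on w' R -> (#|R| <= 4 * #|K| - 3)%N.

Definition reaches U a t :=
  exists2 q, [/\ uniq (x0 :: q), last x0 q = a & {subset x0 :: q <= U}]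
           & path_sum w x0 q = t.

Lemma reaches_start U : x0 \in U -> reaches U x0 0.
Proof. by move=> x0U; exists [::] => //; split=> // u; rewrite inE => /eqP ->. Qed.

Lemma reachesS U U' a t : U \subset U' -> reaches U a t -> reaches U' a t.
Proof.
move=> /subsetP sUU' [q [uq lq sq] <-].
by exists q => //; split=> // u /sq /sUU'.
Qed.

Lemma reaches_step U a z t : z \notin U -> reaches U a t ->
  reaches (z |: U) z (t + w a z).
Proof.
move=> zNU [q [uq lq sq] <-]; exists (rcons q z); last by rewrite path_sum_rcons lq.
split; last 2 first.
- by rewrite last_rcons.
- by move=> u; rewrite -rcons_cons mem_rcons !inE => /orP[-> | /sq ->]; rewrite ?orbT.
rewrite -rcons_cons rcons_uniq uq andbT.
by apply: contra zNU => /sq.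
Qed.

Lemma reaches_closed U z t : U \subset R0 -> z != x0 -> reaches U z t ->
  t + w z x0 != 0.
Proof.
move=> /subsetP sUR0 zx0 [q [uq lq sq] <-].
have dcq : is_dcycle (x0 :: q).
  by rewrite /is_dcycle uq; case: q lq {uq sq} => [/= e|//]; rewrite e eqxx in zx0.
have := zsf_w dcq (fun u uq => sUR0 u (sq u uq)).
by rewrite cycle_sum_cons path_sum_rcons lq.
Qed.

Lemma reaches_extend U a T y z : y \notin U -> z \notin U -> y != z ->
  {in T, forall t, reaches U a t} ->
  {in T :* w a z :|: T :* (w a y + w y z), forall t, reaches (z |: (y |: U)) z t}.
Proof.
move=> yNU zNU yz reachT t.
have zNyU : z \notin y |: U by rewrite !inE negb_or eq_sym yz.
rewrite inE !mem_rcosetB => /orP[] /reachT reach_t.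
  have := reaches_step zNyU (reachesS (subsetUr [set y] U) reach_t).
  by rewrite subrK.
have := reaches_step zNyU (reaches_step yNU reach_t).
by rewrite -addrA subrK.
Qed.

Lemma reaches_proper U z T : U \subset R0 -> x0 \in U -> z \in U -> z != x0 ->
  T \subset H -> {in T, forall t, reaches U z t} -> T \proper H.
Proof.
move=> sUR0 x0U zU zx0 sTH reachT.
apply/properP; split=> //; exists (- w z x0).
  by apply/groupN/labels_w; rewrite ?(subsetP sUR0).
by apply/negP => /reachT /(reaches_closed sUR0 zx0); rewrite addNr eqxx.
Qed.

Lemma stable_bound R a T : a \in R0 -> a \notin R -> R \subset R0 ->
  T != set0 -> T \proper H ->
  {in R &, forall y z, y != z -> T :* w a z = T :* (w a y + w y z)} ->
  (#|R| + 2 * #|T| <= 4 * #|H| - 4)%N.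
Proof.
move=> aR0 aNR /subsetP sRR0 T0 pTH stableT.
pose K := 'C_H[T | 'Rs]%G.
have hK : (2 * #|K| <= #|H|)%N := card_rcoset_stab T0 pTH.
have ltTH : (#|T| < #|H|)%N := proper_card pTH.
have gt0K := cardG_gt0 K.
suff : (#|R| <= 4 * #|K| - 3)%N by lia.
apply: (bound_proper (w' := fun u v => w u v + w a u - w a v)); first lia.
  move=> y z yR zR yz; apply/rcoset_stabP.
  have wa u : u \in R -> w a u \in H.
    by move=> uR; apply: labels_w aR0 (sRR0 u uR) _; apply: contraNneq aNR => ->.
  split; first exact: groupD (groupD (labels_w (sRR0 y yR) (sRR0 z zR) yz) (wa y yR))
                             (groupN (wa z zR)).
  by rewrite [w y z + _]addrC rcosetD -stableT // -rcosetD subrr rcoset1.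
move=> s dcs sR; rewrite cycle_sum_shift.
by apply: zsf_w => // u /sR /sRR0.
Qed.

Lemma grow_bound U R a T : [disjoint U & R] -> U \subset R0 -> R \subset R0 ->
  x0 \in U -> a \in U -> T != set0 -> T \proper H ->
  {in T, forall t, reaches U a t} -> (#|R| + 2 * #|T| <= 4 * #|H| - 4)%N.
Proof.
have [m ltRm] := ubnP #|R|; elim: m => // m IHm in U R a T ltRm *.
move=> dUR sUR0 sRR0 x0U aU T0 pTH reachT.
have aNR : a \notin R by rewrite (disjointFr dUR aU).
have aR0 := subsetP sUR0 a aU.
pose grows p := [&& p.1 \in R, p.2 \in R, p.1 != p.2 &
                    T :* w a p.2 != T :* (w a p.1 + w p.1 p.2)].
have [[y z] /and4P[/= yR zR yz growsT] | stableT] := pickP grows; last first.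
  apply: stable_bound aR0 aNR sRR0 T0 pTH _ => y z yR zR yz.
  by apply/eqP; move: (stableT (y, z)); rewrite /grows /= yR zR yz => /negbFE.
have [yNU zNU] : y \notin U /\ z \notin U by rewrite !(disjointFl dUR).
have wa u : u \in R -> w a u \in H.
  by move=> uR; apply: labels_w aR0 (subsetP sRR0 u uR) _; apply: contraNneq aNR => ->.
set T' := T :* w a z :|: T :* (w a y + w y z).
have sT'H : T' \subset H.
  have sTH := proper_sub pTH.
  rewrite subUset !rcoset_subG ?wa // groupD ?wa //.
  exact: labels_w (subsetP sRR0 y yR) (subsetP sRR0 z zR) yz.
have ltTT' : (#|T| < #|T'|)%N := card_rcosetU_gt growsT.
have sU'R0 : z |: (y |: U) \subset R0.
  by rewrite !subUset !sub1set !(subsetP sRR0) ?sUR0.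
have x0U' : x0 \in z |: (y |: U) by rewrite !inE x0U !orbT.
have zU' : z \in z |: (y |: U) by rewrite !inE eqxx.
have zx0 : z != x0 by apply: contraNneq zNU => ->.
have reachT' := reaches_extend yNU zNU yz reachT.
have cardR : #|R| = (#|R :\ y :\ z| + 2)%N.
  by rewrite (cardsD1 y R) yR (cardsD1 z (R :\ y)) !inE zR eq_sym yz /= addn2.
suff bound' : (#|R :\ y :\ z| + 2 * #|T'| <= 4 * #|H| - 4)%N.
  apply: leq_trans bound'; rewrite cardR -addnA leq_add2l addnC -mulnSr.
  by rewrite leq_mul2l ltTT' orbT.
apply: (IHm (z |: (y |: U)) (R :\ y :\ z) z T') => //.
- by move: ltRm; rewrite cardR addn2 ltnS => /ltnW.
- rewrite disjoint_sym disjoints_subset; apply/subsetP => u.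
  rewrite !inE => /and3P[uz uy uR].
  by rewrite (negbTE uz) (negbTE uy) (disjointFl dUR uR).
- exact: subset_trans (subD1set _ _) (subset_trans (subD1set _ _) sRR0).
- by rewrite -card_gt0 (leq_ltn_trans _ ltTT').
- exact: reaches_proper sU'R0 x0U' zU' zx0 sT'H reachT'.
Qed.

End PathGrowth.

Lemma zsf_card_le H w R : labels_in w R H -> zero_sum_free_on w R ->
  (#|R| <= 4 * #|H| - 3)%N.
Proof.
have [k ltHk] := ubnP #|H|; elim: k => // k IHk in H w R ltHk *.
move=> labw zsfw.
have [leH1 | gtH1] := leqP #|H| 1.
  by have := zsf_card_le1 leH1 labw zsfw; have := cardG_gt0 H; lia.
have [-> | [x0 x0R]] := set_0Vmem R; first by rewrite cards0.
have IH K w' R' : (#|K| < #|H|)%N ->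
    labels_in w' R' K -> zero_sum_free_on w' R' -> (#|R'| <= 4 * #|K| - 3)%N.
  by move=> ltKH; apply: IHk; lia.
suff : (#|R :\ x0| + 2 * #|[set 0%R : A]| <= 4 * #|H| - 4)%N.
  by rewrite (cardsD1 x0 R) x0R cards1; lia.
apply: (@grow_bound H w R x0 labw zsfw IH [set x0] (R :\ x0) x0 [set 0]).
- by rewrite disjoints1 !inE eqxx.
- by rewrite sub1set.
- exact: subD1set.
- exact: set11.
- exact: set11.
- by rewrite -card_gt0 cards1.
- by rewrite properEcard sub1set group1 cards1.
- by move=> t /set1P ->; apply/reaches_start/set11.
Qed.

End ZeroSumFree.

Theorem theorem1 (A : finZmodType) (hA : (1 < #|A|)%N) :
  exists n : nat, [/\ (2 <= n)%N, (n <= 8 * #|A|)%N & no_zsf_labelling A n].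
Proof.
exists (4 * #|A| - 2)%N; split; [lia | lia | move=> w zsfw].
have labw : labels_in w [set: 'I_(4 * #|A| - 2)] [set: A]%G by move=> *; rewrite inE.
have zsfTw : zero_sum_free_on w [set: 'I_(4 * #|A| - 2)] by move=> s dcs _; apply: zsfw.
have : (4 * #|A| - 2 <= 4 * #|A| - 3)%N.
  by have := zsf_card_le labw zsfTw; rewrite !cardsT card_ord.
lia.
Qed.
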